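(* Let $S$ be a range set with countable coinitiality, and let $X$ be an ultrametrizable topological space. Then $X$ is compact if and only if the set of all doubling metrics in $\mathrm{Ult}(X,S)$ is a dense $F_{\sigma}$ subset of $(\mathrm{Ult}(X,S),\mathcal{UD}_X^S)$.
   Context: A range set is a subset $S\subseteq[0,\infty)$ with $0\in S$. $S$ has countable coinitiality if there is a strictly decreasing sequence in $S$ converging to $0$. A metric $d$ on $X$ is $S$-valued if $d(X^2)\subseteq S$; an ultrametric is a metric satisfying $d(x,y)\le \max\{d(x,z),d(z,y)\}$ for all $x,y,z$. $\mathrm{Ult}(X,S)$ is the set of all $S$-valued ultrametrics on $X$ generating the topology of $X$. $\mathcal{UD}_X^S(d,e)$ is the infimum of all $\epsilon\in S\cup\{\infty\}$ such that for all $x,y\in X$, $d(x,y)\le\max\{e(x,y),\epsilon\}$ and $e(x,y)\le\max\{d(x,y),\epsilon\}$; this is an ultrametric on $\mathrm{Ult}(X,S)$ (possibly taking value $\infty$), and $\mathrm{Ult}(X,S)$ carries its topology. For a metric space $(X,d)$ and $A\subseteq X$, $\delta_d(A)$ is the diameter and $\alpha_d(A)=\inf\{d(x,y):x\ne y,\ x,y\in A\}$; $(X,d)$ is doubling if there exist $\beta\in(0,\infty)$, $C\in[1,\infty)$ with $\mathrm{card}(A)\le C(\delta_d(A)/\alpha_d(A))^\beta$ for every finite $A\subseteq X$ with at least two points. $F_\sigma$ means a countable union of closed sets. *)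

From HB Require Import structures.
From mathcomp Require Import all_boot all_order all_algebra.
From mathcomp Require Import all_classical all_reals all_analysis.
Set Implicit Arguments. Unset Strict Implicit. Unset Printing Implicit Defensive.
Import Order.TTheory GRing.Theory Num.Theory.
Local Open Scope classical_set_scope.
Local Open Scope ring_scope.
Import numFieldNormedType.Exports.

Section Defs.
Variable R : realType.

Definition range_set (S : set R) : Prop := S 0 /\ S `<=` [set x | 0 <= x].

Definition countable_coinitiality (S : set R) : Prop :=
  exists u : nat -> R, (forall n, S (u n)) /\ (forall n, u n.+1 < u n) /\
    u @ \oo --> (0 : R^o).

Variable X : topologicalType.

Definition is_metric (d : X -> X -> R) : Prop :=
  [/\ forall x y, 0 <= d x y,
      forall x y, d x y = 0 <-> x = y,
      forall x y, d x y = d y x &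
      forall x y z, d x y <= d x z + d z y].

Definition is_ultrametric (d : X -> X -> R) : Prop :=
  is_metric d /\ forall x y z, d x y <= Num.max (d x z) (d z y).

Definition generates_topology (d : X -> X -> R) : Prop :=
  forall A : set X, open A <->
    (forall x, A x -> exists2 r : R, 0 < r & [set y | d x y < r] `<=` A).

Definition S_valued (S : set R) (d : X -> X -> R) : Prop :=
  forall x y, S (d x y).

Definition ultrametrizable : Prop :=
  exists d : X -> X -> R, is_ultrametric d /\ generates_topology d.

Definition Ult (S : set R) : set (X -> X -> R) :=
  [set d | S_valued S d /\ is_ultrametric d /\ generates_topology d].

(* UD_X^S(d, e): infimum over S u {oo} of admissible eps (empty inf = +oo) *)
Definition UD (S : set R) (d e : X -> X -> R) : \bar R :=
  ereal_inf [set eps%:E | eps in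
    [set eps | S eps /\ forall x y, d x y <= Num.max (e x y) eps /\
                                    e x y <= Num.max (d x y) eps]].

(* diameter and minimal distance of a finite set, given as a duplicate-free list *)
Definition diam (d : X -> X -> R) (s : seq X) : R :=
  \big[Num.max/0]_(x <- s) \big[Num.max/0]_(y <- s) d x y.

Definition sep (d : X -> X -> R) (s : seq X) : R :=
  inf [set r | exists x y, [/\ x \in s, y \in s, x <> y & r = d x y]].

Definition doubling (d : X -> X -> R) : Prop :=
  exists beta C : R, 0 < beta /\ 1 <= C /\
    forall s : seq X, uniq s -> (1 < size s)%N ->
      (size s)%:R <= C * powR (diam d s / sep d s) beta.

Definition UD_dense_in_Ult (S : set R) (A : set (X -> X -> R)) : Prop :=
  A `<=` Ult S /\
  forall d, Ult S d -> forall r : R, 0 < r -> exists2 e, A e & (UD S d e < r%:E)%E.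

Definition UD_closed_in_Ult (S : set R) (F : set (X -> X -> R)) : Prop :=
  F `<=` Ult S /\
  forall d, Ult S d ->
    (forall r : R, 0 < r -> exists2 e, F e & (UD S d e < r%:E)%E) -> F d.

Definition UD_Fsigma_in_Ult (S : set R) (A : set (X -> X -> R)) : Prop :=
  exists F : nat -> set (X -> X -> R),
    (forall n, UD_closed_in_Ult S (F n)) /\ A = \bigcup_n F n.

End Defs.

From HB Require Import structures.
From mathcomp Require Import all_boot all_order all_algebra.
From mathcomp Require Import all_classical all_reals all_analysis.
From mathcomp Require Import zify.
Set Implicit Arguments. Unset Strict Implicit. Unset Printing Implicit Defensive.
Import Order.TTheory GRing.Theory Num.Theory.
Local Open Scope classical_set_scope.
Local Open Scope ring_scope.

(* - F_sigma holds for every X: doubling metrics are those doubling with integer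
     exponent and constant n+1, and each of these classes is UD-closed, since a
     metric UD-closer than the separation of a finite set agrees with it there.
   - If X is not compact, take a filter without cluster points.  The "escape
     metric" puts pairs in distinct escape classes at distance u 0; any metric
     UD-closer than u 0 keeps these distances, and there are arbitrarily many
     classes, so no doubling metric is that close: density fails.
   - If X is compact, a metric d is approximated within u p by the metric equal
     to d above u p and, below u p, to a halving sequence indexed by the first
     difference of binary codes built from finite nets at all scales u m.  A
     finite set then fits into boundedly many u p-blocks times 2^n code words,
     with 2^n <= 2 diam/sep: the approximant is doubling. *)

Section DecreasingSequence.
Variables (R : realType) (u : nat -> R).
Hypothesis u_decr : forall n, u n.+1 < u n.

Lemma decr_lt m n : (m < n)%N -> u n < u m.
Proof.
elim: n => // n IH; rewrite ltnS leq_eqVlt => /orP [/eqP -> | /IH h].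
  exact: u_decr.
exact: lt_trans (u_decr n) h.
Qed.

Lemma decr_le m n : (m <= n)%N -> u n <= u m.
Proof. by rewrite leq_eqVlt => /orP [/eqP -> // | /decr_lt /ltW]. Qed.

Lemma decr_ltE m n : u n < u m -> (m < n)%N.
Proof. by case: (leqP n m) => // /decr_le h1 h2; move: (le_lt_trans h1 h2); rewrite ltxx. Qed.

End DecreasingSequence.

(* Such a sequence crosses an interval [a, b] in at most
   log2 (2 b / a) consecutive indices: this is the source of the doubling bound. *)
Section HalvingSequence.
Variables (R : realType) (v : nat -> R).
Hypothesis v_pos : forall k, 0 < v k.
Hypothesis v_half : forall k, v k.+1 <= v k / 2.
Hypothesis v_small : forall r, 0 < r -> exists k, v k < r.

Lemma halving_decr k : v k.+1 < v k.
Proof.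
by apply: le_lt_trans (v_half k) _; rewrite ltr_pdivrMr // ltr_pMr ?ltr1n.
Qed.

Lemma halving_pow i n : v (i + n) * 2 ^+ n <= v i.
Proof.
elim: n => [|n IH]; first by rewrite addn0 expr0 mulr1.
apply: le_trans IH; rewrite addnS exprS mulrA ler_pM2r ?exprn_gt0 //.
by rewrite -ler_pdivlMr // v_half.
Qed.

Lemma halving_window a b : 0 < a -> a <= b -> exists i n,
  (2 ^+ n : R) <= 2 * (b / a) /\
  forall k, a <= v k -> v k <= b -> (i <= k < i + n)%N.
Proof.
move=> a0 ab; have b0 := lt_le_trans a0 ab.
have exi : exists k, v k <= b by have [k hk] := v_small b0; exists k; exact: ltW.
have exj : exists k, v k.+1 < a.
  by have [k hk] := v_small a0; exists k; exact: lt_trans (halving_decr k) hk.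
(* i is the first index below b, j the last index at or above a. *)
case: (ex_minnP exi) => i vi imin; case: (ex_minnP exj) => j vj jmin.
exists i, (j.+1 - i)%N; split; last first.
  move=> k ak kb; have ik := imin k kb.
  have kj : (k <= j)%N.
    rewrite leqNgt; apply/negP => jk.
    by have := lt_le_trans (le_lt_trans (decr_le halving_decr jk) vj) ak; rewrite ltxx.
  apply/andP; split => //; lia.
(* Between i and j the sequence halves j - i times: 2^(j-i) a <= v i <= b. *)
have ratio1 : 1 <= b / a by rewrite ler_pdivlMr // mul1r.
case: (leqP i j) => ij; last first.
  have -> : (j.+1 - i = 0)%N by apply/eqP; rewrite subn_eq0.
  by rewrite expr0; apply: (le_trans ratio1); rewrite ler_peMl ?ler1n // (le_trans ler01 ratio1).
rewrite subSn // exprS ler_pM2l // ler_pdivlMr //.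
case: (posnP j) => [j0 | jpos].
  have i0 : i = 0%N by apply/eqP; rewrite -leqn0 -j0.
  by rewrite j0 i0 subnn expr0 mul1r.
have aj : a <= v j.
  rewrite leNgt; apply/negP => h; have := jmin j.-1; rewrite prednK // => /(_ h).
  by rewrite leqNgt ltn_predL jpos.
apply: le_trans vi; apply: le_trans (halving_pow i (j - i)).
by rewrite subnKC // mulrC ler_pM2r ?exprn_gt0.
Qed.

End HalvingSequence.

Section Ultrametric.
Variables (R : realType) (X : topologicalType).
Implicit Types (d e : X -> X -> R).

Lemma um_ge0 d : is_ultrametric d -> forall x y, 0 <= d x y.
Proof. by case=> -[]. Qed.

Lemma um_eq0 d : is_ultrametric d -> forall x y, d x y = 0 <-> x = y.
Proof. by case=> -[]. Qed.

Lemma um_sym d : is_ultrametric d -> forall x y, d x y = d y x.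
Proof. by case=> -[]. Qed.

Lemma um_max d : is_ultrametric d -> forall x y z, d x y <= Num.max (d x z) (d z y).
Proof. by case. Qed.

Lemma um_xx d : is_ultrametric d -> forall x, d x x = 0.
Proof. by move=> h x; apply/(um_eq0 h). Qed.

Lemma um_gt0 d : is_ultrametric d -> forall x y, x <> y -> 0 < d x y.
Proof.
move=> h x y xy; rewrite lt_neqAle um_ge0 // andbT; apply/eqP => /esym/(um_eq0 h).
exact: xy.
Qed.

Lemma um_lt d x y z r : is_ultrametric d -> d x z < r -> d z y < r -> d x y < r.
Proof. by move=> h h1 h2; apply: le_lt_trans (um_max h x y z) _; rewrite gt_max h1 h2. Qed.

Lemma um_ball d x y r : is_ultrametric d -> d x y < r ->
  forall z, (d x z < r) <-> (d y z < r).
Proof.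
move=> h hxy z; split => hz; last exact: (um_lt h) hxy hz.
by apply: (um_lt h) hz; rewrite um_sym.
Qed.

Lemma ultrametricP d :
  (forall x y, 0 <= d x y) -> (forall x y, d x y = 0 <-> x = y) ->
  (forall x y, d x y = d y x) -> (forall x y z, d x y <= Num.max (d x z) (d z y)) ->
  is_ultrametric d.
Proof.
move=> h0 h1 h2 h3; split => //; split => // x y z.
by apply: le_trans (h3 x y z) _; rewrite ge_max lerDl lerDr !h0.
Qed.

Lemma generates_topology_transfer d e : generates_topology d ->
  (forall x r, 0 < r -> exists2 r', 0 < r' & forall y, d x y < r' -> e x y < r) ->
  (forall x r, 0 < r -> exists2 r', 0 < r' & forall y, e x y < r' -> d x y < r) ->
  generates_topology e.
Proof.
move=> hd de ed A; rewrite hd; split => H x Ax.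
  have [r r0 hr] := H x Ax; have [r' r'0 hr'] := ed x r r0.
  by exists r' => // y /hr' /hr.
have [r r0 hr] := H x Ax; have [r' r'0 hr'] := de x r r0.
by exists r' => // y /hr' /hr.
Qed.

Lemma nbhs_ball d x B : generates_topology d ->
  nbhs x B -> exists2 r, 0 < r & [set y | d x y < r] `<=` B.
Proof.
move=> hg; rewrite nbhsE /= => -[U [oU Ux] UB].
by have [r r0 hr] := (hg U).1 oU x Ux; exists r => //; exact: subset_trans UB.
Qed.

Lemma ball_nbhs d x r : is_ultrametric d -> generates_topology d ->
  0 < r -> nbhs x [set y | d x y < r].
Proof.
move=> hu hg r0; apply: open_nbhs_nbhs; split; last by rewrite /= um_xx.
by apply/hg => y /= hy; exists r => // z /= hz; exact: (um_lt hu) hy hz.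
Qed.

End Ultrametric.

Section DiameterSeparation.
Variables (R : realType) (X : topologicalType).
Implicit Types (d e : X -> X -> R) (s : seq X).

Lemma finite_pos_lb (l : seq R) : (forall x, x \in l -> 0 < x) ->
  exists2 m : R, 0 < m & forall x, x \in l -> m <= x.
Proof.
elim: l => [|a l IH] H; first by exists 1.
have [m m0 hm] : exists2 m : R, 0 < m & forall x, x \in l -> m <= x.
  by apply: IH => x xl; apply: H; rewrite inE xl orbT.
exists (Num.min a m); first by rewrite lt_min m0 andbT; apply: H; rewrite inE eqxx.
move=> x; rewrite inE => /orP [/eqP -> | xl]; first by rewrite ge_min lexx.
by rewrite ge_min (hm x xl) orbT.
Qed.

Lemma pairs_lb d s : (forall x y, x <> y -> 0 < d x y) ->
  exists2 m, 0 < m & forall x y, x \in s -> y \in s -> x <> y -> m <= d x y.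
Proof.
move=> hpos.
pose l := [seq d p.1 p.2 | p <- [seq (x, y) | x <- s, y <- s] & p.1 != p.2].
have [m m0 hm] : exists2 m : R, 0 < m & forall x, x \in l -> m <= x.
  apply: finite_pos_lb => r /mapP [p]; rewrite mem_filter => /andP [/eqP hp _] ->.
  exact: hpos.
exists m => // x y xs ys xy; apply: hm; apply/mapP; exists (x, y) => //.
rewrite mem_filter /=; apply/andP; split; first by apply/eqP.
by apply/allpairsP; exists (x, y).
Qed.

Lemma two_points s : uniq s -> (1 < size s)%N ->
  exists x y, [/\ x \in s, y \in s & x <> y].
Proof.
case: s => [|a [|b s]] //= /andP [abs _] _; exists a, b; split.
- by rewrite inE eqxx.
- by rewrite !inE eqxx orbT.
- by move=> ab; move: abs; rewrite ab inE eqxx.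
Qed.

Lemma sep_ge d s m : uniq s -> (1 < size s)%N ->
  (forall x y, x \in s -> y \in s -> x <> y -> m <= d x y) -> m <= sep d s.
Proof.
move=> us ss hm; apply: lb_le_inf => [|r [x [y [xs ys xy ->]]]]; last exact: hm.
by have [x [y [xs ys xy]]] := two_points us ss; exists (d x y), x, y.
Qed.

Lemma sep_le d s x y : (forall x y, 0 <= d x y) -> x \in s -> y \in s -> x <> y ->
  sep d s <= d x y.
Proof.
move=> h0 xs ys xy; apply: ge_inf; last by exists x, y.
by exists 0 => r [a [b [_ _ _ ->]]].
Qed.

Lemma diam_ge d s x y : x \in s -> y \in s -> d x y <= diam d s.
Proof.
move=> xs ys; apply: (le_trans _ (le_bigmax_seq _ _ _ _ xs _)) => //.
exact: (le_bigmax_seq _ _ _ (fun y => d x y) ys).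
Qed.

Lemma diam_le d s M : 0 <= M ->
  (forall x y, x \in s -> y \in s -> d x y <= M) -> diam d s <= M.
Proof.
move=> M0 h; rewrite /diam big_seq; apply: (big_ind (fun v => v <= M)) => //.
  by move=> a b ha hb; rewrite ge_max ha hb.
move=> x xs; rewrite big_seq; apply: (big_ind (fun v => v <= M)) => //.
  by move=> a b ha hb; rewrite ge_max ha hb.
by move=> y ys; apply: h.
Qed.

Lemma sep_pos d s : (forall x y, x <> y -> 0 < d x y) -> uniq s -> (1 < size s)%N ->
  0 < sep d s.
Proof.
by move=> hp us ss; have [m m0 hm] := pairs_lb s hp; exact: lt_le_trans m0 (sep_ge us ss hm).
Qed.

Lemma sep_le_diam d s : (forall x y, 0 <= d x y) -> uniq s -> (1 < size s)%N ->
  sep d s <= diam d s.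
Proof.
move=> h0 us ss; have [x [y [xs ys xy]]] := two_points us ss.
exact: le_trans (sep_le h0 xs ys xy) (diam_ge d xs ys).
Qed.

Lemma diam_eq d e s : (forall x y, x \in s -> y \in s -> d x y = e x y) ->
  diam d s = diam e s.
Proof. by move=> h; apply: eq_big_seq => x xs; apply: eq_big_seq => y ys; exact: h. Qed.

Lemma sep_eq d e s : (forall x y, x \in s -> y \in s -> x <> y -> d x y = e x y) ->
  sep d s = sep e s.
Proof.
move=> h; rewrite /sep; congr inf; apply/seteqP; split => r [x [y [xs ys xy ->]]];
  by exists x, y; split => //; rewrite h.
Qed.

End DiameterSeparation.

Section UDcloseness.
Variables (R : realType) (X : topologicalType).
Implicit Types (d e : X -> X -> R) (S : set R).

(* eps witnesses UD d e <= eps. *)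
Definition UD_close d e (eps : R) := forall x y,
  d x y <= Num.max (e x y) eps /\ e x y <= Num.max (d x y) eps.

Lemma UD_ltP S d e r : (UD S d e < r%:E)%E ->
  exists eps, [/\ S eps, eps < r & UD_close d e eps].
Proof. by move=> /ereal_inf_lt [_ [eps [Seps hc] <-]]; rewrite lte_fin => er; exists eps. Qed.

Lemma UD_le S d e eps : S eps -> UD_close d e eps -> (UD S d e <= eps%:E)%E.
Proof. by move=> Se hc; apply: ereal_inf_lbound; exists eps. Qed.

Lemma UD_close_agree d e eps x y : UD_close d e eps -> eps < d x y -> e x y = d x y.
Proof.
move=> /(_ x y) [de ed] epsd; rewrite (max_idPl (ltW epsd)) in ed.
apply/eqP; rewrite eq_le ed /=; case: (leP eps (e x y)) => [epse|ee].
  by rewrite (max_idPl epse) in de.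
by move: (lt_le_trans epsd de); rewrite (max_idPr (ltW ee)) ltxx.
Qed.

Definition doubling_with d (b c : R) := forall s, uniq s -> (1 < size s)%N ->
  (size s)%:R <= c * powR (diam d s / sep d s) b.

Definition doubling_level S (n : nat) :=
  [set d | Ult S d /\ doubling_with d n.+1%:R n.+1%:R].

(* Exponent and constant of a doubling ultrametric can be taken to be integers,
   since diam/sep >= 1. *)
Lemma doubling_levelP S d : Ult S d -> doubling d <-> exists n, doubling_level S n d.
Proof.
move=> Ud; have [_ [hu _]] := Ud; split; last first.
  by move=> [n [_ hn]]; exists n.+1%:R, n.+1%:R; split => //; rewrite ler1n.
move=> [b [c [b0 [c1 hd]]]].
have c0 : 0 <= c := le_trans ler01 c1.
pose n := maxn (Num.Def.archi_bound b) (Num.Def.archi_bound c).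
have bn : b <= n.+1%:R.
  apply/ltW/(lt_le_trans (archi_boundP (ltW b0))).
  by rewrite ler_nat; apply: leqW; exact: leq_maxl.
have cn : c <= n.+1%:R.
  apply/ltW/(lt_le_trans (archi_boundP c0)).
  by rewrite ler_nat; apply: leqW; exact: leq_maxr.
exists n; split => // s us ss; apply: le_trans (hd s us ss) _.
have sp : 0 < sep d s := sep_pos (um_gt0 hu) us ss.
have r1 : 1 <= diam d s / sep d s.
  by rewrite ler_pdivlMr // mul1r; apply: sep_le_diam => //; exact: um_ge0.
by apply: ler_pM => //; [exact: powR_ge0 | exact: ler_powR].
Qed.

Lemma doubling_level_closed S n : UD_closed_in_Ult S (doubling_level S n).
Proof.
split=> [d []//|d Ud H]; split => // s us ss.
have [_ [hu _]] := Ud.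
have [m m0 hm] := pairs_lb s (um_gt0 hu).
have [e [Ue he] /UD_ltP [eps [_ em hc]]] := H m m0.
have [_ [hue _]] := Ue.
have agree x y : x \in s -> y \in s -> x <> y -> e x y = d x y.
  by move=> xs ys xy; apply: UD_close_agree hc _; exact: lt_le_trans em (hm x y xs ys xy).
have -> : diam d s = diam e s.
  apply: diam_eq => x y xs ys; case: (pselect (x = y)) => [->|xy].
    by rewrite !um_xx.
  by rewrite agree.
by rewrite (@sep_eq _ _ d e) => [|x y xs ys xy]; [exact: he | rewrite agree].
Qed.

Lemma doubling_Fsigma S : UD_Fsigma_in_Ult S [set d | Ult S d /\ @doubling R X d].
Proof.
exists (doubling_level S); split; first exact: doubling_level_closed.
apply/seteqP; split => [d [Ud /(doubling_levelP Ud) [n hn]]|d [n _ dn]].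
  by exists n.
by have Ud := dn.1; split => //; apply/(doubling_levelP Ud); exists n.
Qed.

End UDcloseness.

(* A metric admitting arbitrarily large finite sets on which it is constant
   is not doubling: on such a set diam/sep = 1, while its size is unbounded. *)
Lemma equidistant_not_doubling (R : realType) (X : topologicalType)
    (f : X -> X -> R) (a : R) : 0 < a ->
  (forall x y, 0 <= f x y) -> (forall x, f x x = 0) ->
  (forall N, exists s, [/\ uniq s, size s = N &
     forall x y, x \in s -> y \in s -> x <> y -> f x y = a]) ->
  ~ doubling f.
Proof.
move=> a0 f0 fxx big [b [c [b0 [c1 hdb]]]].
have c0 : 0 <= c := le_trans ler01 c1.
have [s [us ss hs]] := big (maxn 2 (Num.Def.archi_bound c)).
have s1 : (1 < size s)%N by rewrite ss leq_max leqnn.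
have sepa : sep f s = a.
  apply/eqP; rewrite eq_le sep_ge ?andbT => [|//|//|x y xs ys xy]; last by rewrite hs.
  have [x [y [xs ys xy]]] := two_points us s1.
  by rewrite -(hs x y xs ys xy) sep_le.
have diama : diam f s = a.
  apply/eqP; rewrite eq_le -{2}sepa sep_le_diam // andbT.
  apply: diam_le => [|x y xs ys]; first exact: ltW.
  by case: (pselect (x = y)) => [->|xy]; [rewrite fxx ltW | rewrite hs].
have := hdb s us s1; rewrite diama sepa divff ?gt_eqF // powR1 mulr1 ss.
apply/negP; rewrite -ltNge; apply: lt_le_trans (archi_boundP c0) _.
by rewrite ler_nat leq_max leqnn orbT.
Qed.

(* Call r an escape radius at x if some member of F misses the
   d-ball of radius r at x, and relate x to y when y is within half an escape
   radius of x.  This is an equivalence relation with open classes, each class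
   is missed by a member of F, hence there are infinitely many classes. *)
Section EscapeRelation.
Variables (R : realType) (X : topologicalType) (d : X -> X -> R).
Hypothesis d_ult : is_ultrametric d.
Hypothesis d_top : generates_topology d.
Variable F : set_system X.
Hypothesis F_proper : ProperFilter F.
Hypothesis F_nocluster : forall x, ~ cluster F x.

Definition escape_radius x r := [/\ 0 < r, r <= 1 &
  exists A, F A /\ forall z, d x z < r -> ~ A z].

Definition escape_rel x y := exists r, escape_radius x r /\ d x y < r / 2.

Lemma escape_radius_ex x : exists r, escape_radius x r.
Proof.
have [A [B [FA nB hAB]]] : exists A B, [/\ F A, nbhs x B & forall z, A z -> B z -> False].
  apply: contrapT => H; elim: (@F_nocluster x) => A B FA nB; apply: contrapT => hne.
  by apply: H; exists A, B; split => // z Az Bz; apply: hne; exists z.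
have [r r0 hr] := nbhs_ball d_top nB.
exists (Num.min r 1); split; [by rewrite lt_min r0 ltr01 | by rewrite ge_min lexx orbT |].
exists A; split => // z hz Az; apply: (hAB z Az); apply: hr.
by apply: lt_le_trans hz _; rewrite ge_min lexx.
Qed.

Lemma escape_radius_shift x y r : d x y < r -> escape_radius x r -> escape_radius y r.
Proof.
move=> hxy [r0 r1 [A [FA hA]]]; split => //; exists A; split => // z hz.
by apply: hA; apply/(um_ball d_ult hxy).
Qed.

Lemma half_lt (r : R) : 0 < r -> r / 2 < r.
Proof. by move=> r0; rewrite ltr_pdivrMr // ltr_pMr // ltr1n. Qed.

Lemma escape_rel_refl x : escape_rel x x.
Proof.
have [r hr] := escape_radius_ex x; exists r; split => //.
by rewrite (um_xx d_ult) divr_gt0 //; case: hr.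
Qed.

Lemma escape_rel_sym x y : escape_rel x y -> escape_rel y x.
Proof.
move=> [r [hr hxy]]; exists r; split; last by rewrite um_sym.
have r0 : 0 < r by case: hr.
by apply: escape_radius_shift hr; exact: lt_trans hxy (half_lt r0).
Qed.

Lemma escape_rel_trans x y z : escape_rel x y -> escape_rel y z -> escape_rel x z.
Proof.
move=> [r1 [h1 hxy]] [r2 [h2 hyz]].
have r10 : 0 < r1 by case: h1.
case: (leP r2 r1) => r21.
  exists r1; split => //; apply: (um_lt d_ult) hxy _; apply: lt_le_trans hyz _.
  by rewrite ler_pM2r.
exists r2; split; last first.
  by apply: (um_lt d_ult) _ hyz; apply: lt_trans hxy _; rewrite ltr_pM2r.
apply: (escape_radius_shift (x := y)) h2.
by rewrite um_sym //; apply: lt_trans hxy _; exact: lt_trans (half_lt r10) r21.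
Qed.

Lemma escape_rel_nbhs x : exists2 r, 0 < r & forall y, d x y < r -> escape_rel x y.
Proof.
have [r hr] := escape_radius_ex x.
by exists (r / 2) => [|y hy]; [case: hr => r0 _ _; rewrite divr_gt0 | exists r].
Qed.

(* Escape radii at x are bounded by 1, so they have a supremum rho; an escape
   radius above rho/2 gives a member of F missing the rho/2-ball at x, which
   contains the whole class of x. *)
Lemma escape_class_avoid x : exists A, F A /\ forall z, escape_rel x z -> ~ A z.
Proof.
pose E := [set r | escape_radius x r].
have [r0 hr0] := escape_radius_ex x.
have hs : has_sup E by split; [exists r0 | exists 1 => r []].
have rho0 : 0 < sup E by apply: lt_le_trans (sup_upper_bound hs hr0); case: hr0.
have [r1 [_ _ [A [FA hA]]] hr1] := sup_gt (ex_intro _ r0 hr0) (half_lt rho0).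
exists A; split => // z [r [hr hz]]; apply: hA; apply: lt_trans hz _.
by apply: le_lt_trans hr1; rewrite ler_pM2r // sup_upper_bound.
Qed.

(* Finitely many classes are missed by one (nonempty) member of F. *)
Lemma escape_fresh_point (l : seq X) : exists x, forall y, y \in l -> ~ escape_rel x y.
Proof.
have [A [FA hA]] : exists A, F A /\ forall y z, y \in l -> escape_rel y z -> ~ A z.
  elim: l => [|a l [A [FA hA]]]; first by exists setT; split; [exact: filterT | ].
  have [B [FB hB]] := escape_class_avoid a.
  exists (A `&` B); split; first exact: filterI.
  move=> y z; rewrite inE => /orP [/eqP -> | yl] h [Az Bz]; first exact: hB h Bz.
  exact: hA yl h Az.
have [z Az] := filter_ex FA.
by exists z => y yl /escape_rel_sym hyz; apply: hA yl hyz Az.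
Qed.

Lemma escape_scattered N : exists s : seq X, [/\ uniq s, size s = N &
  forall x y, x \in s -> y \in s -> x <> y -> ~ escape_rel x y].
Proof.
elim: N => [|N [s [us ss hs]]]; first by exists [::]; split.
have [x hx] := escape_fresh_point s.
exists (x :: s); split => /=; last 1 first.
- move=> a b; rewrite !inE => /orP [/eqP -> | ai] /orP [/eqP -> | bi] ab //.
  + exact: hx.
  + by move=> /escape_rel_sym; apply: hx.
  + exact: hs.
- by rewrite us andbT; apply/negP => xs; exact: hx xs (escape_rel_refl x).
- by rewrite ss.
Qed.

End EscapeRelation.

Lemma noncompact_filter (X : topologicalType) : ~ compact [set: X] ->
  exists F : set_system X, ProperFilter F /\ forall x, ~ cluster F x.
Proof.
move=> nc; apply: contrapT => H; apply: nc => F FF _; apply: contrapT => H2; apply: H.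
by exists F; split => // x cx; apply: H2; exists x.
Qed.

Section CompactNets.
Variables (R : realType) (X : topologicalType) (d : X -> X -> R).
Hypothesis d_ult : is_ultrametric d.
Hypothesis d_top : generates_topology d.
Hypothesis X_compact : compact [set: X].

(* Otherwise the sets of points avoiding the t-balls around finite lists would
   generate a proper filter, whose cluster point p avoids the ball around [:: p]. *)
Lemma compact_net t : 0 < t -> exists L : seq X, forall x, exists2 c, c \in L & d x c < t.
Proof.
move=> t0; apply: contrapT => H.
pose B (L : seq X) := [set x | forall c, c \in L -> ~ (d x c < t)].
have hB L : B L !=set0.
  apply: contrapT => H2; apply: H; exists L => x.
  by apply: contrapT => H3; apply: H2; exists x => c cL hxc; apply: H3; exists c.
have GF : Filter (filter_from setT B).
  apply: filter_fromT_filter; first by exists [::].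
  by move=> L1 L2; exists (L1 ++ L2) => x Bx; split => c cL; apply: Bx; rewrite mem_cat cL ?orbT.
have GP : ProperFilter (filter_from setT B) by apply: filter_from_proper => L _; apply: hB.
have [p [_ cp]] := X_compact GP filterT.
have [z [Bz hz]] := cp _ _ (@in_filter_from _ _ setT B [:: p] I) (ball_nbhs p d_ult d_top t0).
by apply: (Bz p); [rewrite inE eqxx | rewrite um_sym].
Qed.

Lemma compact_nets (r : nat -> R) : (forall m, 0 < r m) ->
  exists L : nat -> seq X, forall m x, exists2 c, c \in L m & d x c < r m.
Proof. by move=> r0; have [L hL] := choice (fun m => compact_net (r0 m)); exists L. Qed.

End CompactNets.

(* Given finite nets L m at scales u m, level m of the
   code of x records, for each index b <= size (L m), whether b is the index of
   the first centre of L m within u m of x; two points have the same index at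
   level m exactly when they lie in a common u m-ball.  The levels are
   concatenated into one bit sequence, and first_diff x y is the first position
   where the codes of x and y differ. *)
Section Coding.
Variables (R : realType) (X : topologicalType) (d : X -> X -> R).
Hypothesis d_ult : is_ultrametric d.
Variables (u : nat -> R) (L : nat -> seq X).
Hypothesis L_net : forall m x, exists2 c, c \in L m & d x c < u m.

Definition net_size m := size (L m).
Definition net_index m x := find (fun c => d x c < u m) (L m).

Lemma net_index_lt m x : (net_index m x < net_size m)%N.
Proof. by rewrite -has_find; have [c cL hc] := L_net m x; apply/hasP; exists c. Qed.

Lemma net_indexP m x y : net_index m x = net_index m y <-> d x y < u m.
Proof.
split => [h|h]; last first.
  by apply: eq_find => c; apply/idP/idP => hh; apply/(um_ball d_ult h).
pose c := nth x (L m) (net_index m x).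
have centre z : net_index m z = net_index m x -> d z c < u m.
  move=> hz; rewrite /c -hz; apply: (@nth_find _ x (fun c => d z c < u m)).
  by rewrite has_find; exact: net_index_lt.
by apply: (um_lt d_ult) (centre x erefl) _; rewrite um_sym // centre.
Qed.

Definition level_bits m x : seq bool :=
  [seq net_index m x == b | b <- iota 0 (net_size m).+1].

Definition code_prefix x K := flatten [seq level_bits m x | m <- iota 0 K].
Definition code_offset K := sumn [seq (net_size m).+1 | m <- iota 0 K].

Lemma size_code_prefix x K : size (code_prefix x K) = code_offset K.
Proof.
rewrite /code_prefix /code_offset size_flatten /shape -map_comp.
by congr sumn; apply: eq_map => m /=; rewrite size_map size_iota.
Qed.

Lemma code_offset_S K : code_offset K.+1 = (code_offset K + (net_size K).+1)%N.
Proof. by rewrite /code_offset -addn1 iotaD map_cat sumn_cat /= addn0. Qed.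

Lemma code_prefix_S x K : code_prefix x K.+1 = code_prefix x K ++ level_bits K x.
Proof. by rewrite /code_prefix -addn1 iotaD map_cat flatten_cat /= cats0. Qed.

Lemma code_offset_ge K : (K <= code_offset K)%N.
Proof. by elim: K => // K IH; rewrite code_offset_S -addn1 leq_add. Qed.

Lemma code_offset_mono K1 K2 : (K1 <= K2)%N -> (code_offset K1 <= code_offset K2)%N.
Proof.
move=> /subnKC <-; elim: (K2 - K1)%N => [|n IH]; first by rewrite addn0.
by rewrite addnS code_offset_S (leq_trans IH) // leq_addr.
Qed.

Lemma code_prefix_extend x K1 K2 p : (K1 <= K2)%N -> (p < code_offset K1)%N ->
  nth false (code_prefix x K2) p = nth false (code_prefix x K1) p.
Proof.
move=> /subnKC <- hp; elim: (K2 - K1)%N => [|n IH]; first by rewrite addn0.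
rewrite addnS code_prefix_S nth_cat size_code_prefix (leq_trans hp) //.
by apply: code_offset_mono; rewrite leq_addr.
Qed.

Definition code x p := nth false (code_prefix x p.+1) p.

Lemma code_prefix_nth x K p : (p < code_offset K)%N ->
  code x p = nth false (code_prefix x K) p.
Proof.
move=> hp; have hp1 : (p < code_offset p.+1)%N by apply: leq_trans (code_offset_ge _).
rewrite /code -(@code_prefix_extend x p.+1 (maxn K p.+1)) ?leq_maxr //.
by rewrite (@code_prefix_extend x K (maxn K p.+1)) ?leq_maxl.
Qed.

Lemma code_level x M b : (b <= net_size M)%N ->
  code x (code_offset M + b) = (net_index M x == b).
Proof.
move=> hb; rewrite (@code_prefix_nth x M.+1); last first.
  by rewrite code_offset_S ltn_add2l ltnS.
rewrite code_prefix_S nth_cat size_code_prefix ltnNge leq_addr /= addKn /level_bits.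
by rewrite (nth_map 0%N) ?size_iota ?ltnS // nth_iota ?ltnS.
Qed.

Lemma code_eq_upto K x y : (forall m, (m < K)%N -> net_index m x = net_index m y) ->
  forall p, (p < code_offset K)%N -> code x p = code y p.
Proof.
move=> h p hp; rewrite !(code_prefix_nth _ hp); congr nth; congr flatten.
by apply/eq_in_map => m; rewrite mem_iota add0n => /h; rewrite /level_bits => ->.
Qed.

Hypothesis u_small : forall r, 0 < r -> exists m, u m < r.

Lemma code_diff x y : x <> y -> exists p, code x p != code y p.
Proof.
move=> xy; have [m hm] := u_small (um_gt0 d_ult xy).
have ne : net_index m x != net_index m y.
  by apply/eqP => /net_indexP h; move: (lt_trans h hm); rewrite ltxx.
have hle : (net_index m x <= net_size m)%N by exact: ltnW (net_index_lt _ _).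
exists (code_offset m + net_index m x)%N; rewrite !code_level // eqxx.
by rewrite [net_index m y == _]eq_sym (negbTE ne).
Qed.

Definition first_diff x y : nat :=
  match pselect (exists p, code x p != code y p) with
  | left H => ex_minn H
  | right _ => 0%N
  end.

Lemma first_diffP x y : x <> y ->
  code x (first_diff x y) != code y (first_diff x y) /\
  forall q, code x q != code y q -> (first_diff x y <= q)%N.
Proof.
move=> xy; rewrite /first_diff; case: pselect => [H|H]; last by case: H; exact: code_diff.
by case: ex_minnP.
Qed.

Lemma first_diff_eq x y q : x <> y -> (q < first_diff x y)%N -> code x q = code y q.
Proof.
move=> /first_diffP [_ h] qlt; apply/eqP; apply: contraTT qlt => /h.
by rewrite -leqNgt.
Qed.

Lemma first_diff_sym x y : x <> y -> first_diff x y = first_diff y x.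
Proof.
move=> xy; have yx : y <> x by move=> h; apply: xy.
have [a1 a2] := first_diffP xy; have [b1 b2] := first_diffP yx.
by apply/eqP; rewrite eqn_leq a2 1?eq_sym // b2 // eq_sym.
Qed.

Lemma first_diff_ult x y z : x <> y -> x <> z -> z <> y ->
  (minn (first_diff x z) (first_diff z y) <= first_diff x y)%N.
Proof.
move=> xy xz zy; have [a1 _] := first_diffP xy.
rewrite leqNgt; apply/negP => h; move: a1.
rewrite (first_diff_eq xz); last exact: leq_trans h (geq_minl _ _).
by rewrite (first_diff_eq zy) ?eqxx //; exact: leq_trans h (geq_minr _ _).
Qed.

Lemma first_diff_ge x y K : x <> y ->
  (forall q, (q < K)%N -> code x q = code y q) -> (K <= first_diff x y)%N.
Proof.
move=> xy h; have [a1 _] := first_diffP xy; rewrite leqNgt; apply/negP => /h.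
by move/eqP: a1.
Qed.

(* Points are told apart by their level-p index and n code bits. *)
Lemma block_card s p i n : uniq s ->
  (forall x y, x \in s -> y \in s -> x <> y -> net_index p x = net_index p y ->
     (i <= first_diff x y < i + n)%N) ->
  (size s <= (net_size p).+1 * 2 ^ n)%N.
Proof.
move=> us window.
pose Phi x := ((inord (net_index p x) : 'I_(net_size p).+1),
               [tuple code x (i + k) | k < n]).
have inj : {in s &, injective Phi}.
  move=> x y xs ys h; apply: contrapT => xy.
  have hb : net_index p x = net_index p y.
    move: (congr1 (fun q => val q.1) h).
    by rewrite /= !inordK // ltnS ltnW // net_index_lt.
  have /andP [ifd fdn] := window x y xs ys xy hb.
  have kn : (first_diff x y - i < n)%N by lia.
  have := congr1 (fun q => tnth q.2 (Ordinal kn)) h; rewrite /= !tnth_mktuple /= subnKC //.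
  by move=> /eqP; apply/negP; exact: (first_diffP xy).1.
have um : uniq (map Phi s) by rewrite map_inj_in_uniq.
rewrite -(size_map Phi) -(card_uniqP um).
by have := max_card (mem (map Phi s)); rewrite card_prod card_ord card_tuple card_bool.
Qed.

End Coding.

Section CoinitialSequence.
Variables (R : realType) (S : set R) (u : nat -> R).
Hypothesis S_range : range_set S.
Hypothesis u_in_S : forall n, S (u n).
Hypothesis u_decr : forall n, u n.+1 < u n.
Hypothesis u_cvg0 : u @ \oo --> (0 : R^o).

Lemma coin_pos n : 0 < u n.
Proof. exact: le_lt_trans (S_range.2 _ (u_in_S n.+1)) (u_decr n). Qed.

Lemma coin_small r : 0 < r -> exists n, u n < r.
Proof.
move=> r0; have /cvgrPdist_lt /(_ r r0) [N _ HN] := u_cvg0.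
by exists N; have := HN N (leqnn N); rewrite sub0r normrN ger0_norm // ltW // coin_pos.
Qed.

Definition floor_u (t : R) : R :=
  match pselect (exists n, u n <= t) with
  | left H => u (ex_minn H)
  | right _ => u 0
  end.

Lemma floor_uP t : 0 < t -> exists n, [/\ floor_u t = u n, u n <= t &
  forall m, u m <= t -> (n <= m)%N].
Proof.
move=> t0; rewrite /floor_u; case: pselect => [H|H]; last first.
  by exfalso; apply: H; have [n hn] := coin_small t0; exists n; exact: ltW.
by case: ex_minnP => n hn hmin; exists n.
Qed.

Lemma floor_u_pos t : 0 < t -> 0 < floor_u t.
Proof. by move=> /floor_uP [n [-> _ _]]; exact: coin_pos. Qed.

Lemma floor_u_le t : 0 < t -> floor_u t <= t.
Proof. by move=> /floor_uP [n [-> ? _]]. Qed.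

Lemma floor_u_le0 t : 0 < t -> floor_u t <= u 0.
Proof. by move=> /floor_uP [n [-> _ _]]; apply: decr_le. Qed.

Lemma floor_u_in_S t : 0 < t -> S (floor_u t).
Proof. by move=> /floor_uP [n [-> _ _]]. Qed.

Lemma floor_u_mono t t' : 0 < t -> t <= t' -> floor_u t <= floor_u t'.
Proof.
move=> t0 tt'; have t'0 := lt_le_trans t0 tt'.
have [n [-> hn _]] := floor_uP t0; have [n' [-> _ hm']] := floor_uP t'0.
by apply: decr_le => //; apply: hm'; exact: le_trans hn tt'.
Qed.

Lemma floor_u_lt t m : 0 < t -> floor_u t < u m -> t < u m.
Proof.
move=> t0; have [n [-> _ hm]] := floor_uP t0 => /(decr_ltE u_decr) mn.
by rewrite ltNge; apply/negP => /hm; rewrite leqNgt mn.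
Qed.

Lemma coin_halving p : exists g : nat -> nat,
  g 0%N = p /\ forall k, (g k < g k.+1)%N /\ u (g k.+1) <= u (g k) / 2.
Proof.
have step n : exists m, (n < m)%N /\ u m <= u n / 2.
  have [m0 hm0] := coin_small (divr_gt0 (coin_pos n) (ltr0Sn R 1)).
  exists (maxn m0 n.+1); split; first by rewrite leq_max leqnn orbT.
  exact: le_trans (decr_le u_decr (leq_maxl _ _)) (ltW hm0).
have [h hh] := choice step.
by exists (fun k => iter k h p); split => // k; rewrite iterS; apply: hh.
Qed.

Section EscapeMetric.
Variables (X : topologicalType) (d : X -> X -> R).
Hypothesis d_ult : is_ultrametric d.
Hypothesis d_top : generates_topology d.
Variable F : set_system X.
Hypothesis F_nocluster : forall x, ~ cluster F x.

Definition escape_metric x y : R :=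
  if x == y then 0 else if `[< escape_rel d F x y >] then floor_u (d x y) else u 0.

Lemma escape_metric_xx x : escape_metric x x = 0.
Proof. by rewrite /escape_metric eqxx. Qed.

Lemma escape_metric_rel x y : x <> y -> escape_rel d F x y ->
  escape_metric x y = floor_u (d x y).
Proof. by move=> xy r; rewrite /escape_metric; case: eqP => // _; case: asboolP. Qed.

Lemma escape_metric_unrel x y : x <> y -> ~ escape_rel d F x y -> escape_metric x y = u 0.
Proof. by move=> xy nr; rewrite /escape_metric; case: eqP => // _; case: asboolP. Qed.

Lemma escape_metric_pos x y : x <> y -> 0 < escape_metric x y.
Proof.
move=> xy; case: (pselect (escape_rel d F x y)) => r; last first.
  by rewrite escape_metric_unrel // coin_pos.
by rewrite escape_metric_rel // floor_u_pos // (um_gt0 d_ult).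
Qed.

Lemma escape_metric_ge0 x y : 0 <= escape_metric x y.
Proof.
by case: (pselect (x = y)) => [->|/escape_metric_pos/ltW//]; rewrite escape_metric_xx.
Qed.

Lemma escape_metric_le0 x y : escape_metric x y <= u 0.
Proof.
rewrite /escape_metric; case: eqP => xy; first exact: ltW (coin_pos 0).
by case: asboolP => _ //; apply/floor_u_le0/(um_gt0 d_ult).
Qed.

Lemma escape_metric_ult : is_ultrametric escape_metric.
Proof.
apply: ultrametricP; first exact: escape_metric_ge0.
- move=> x y; split => [|->]; last exact: escape_metric_xx.
  by apply: contraPP => xy; apply/eqP; rewrite gt_eqF // escape_metric_pos.
- move=> x y; case: (pselect (x = y)) => [->//|xy].
  have yx : y <> x by move=> h; apply: xy.
  case: (pselect (escape_rel d F x y)) => r.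
    have ryx := escape_rel_sym d_ult r.
    by rewrite !escape_metric_rel // (um_sym d_ult).
  by rewrite !escape_metric_unrel // => /(escape_rel_sym d_ult).
move=> x y z; case: (pselect (x = y)) => [->|xy].
  by rewrite escape_metric_xx le_max escape_metric_ge0.
case: (pselect (z = x)) => [->|zx]; first by rewrite escape_metric_xx le_max lexx orbT.
case: (pselect (z = y)) => [->|zy]; first by rewrite escape_metric_xx le_max lexx.
have xz : x <> z by move=> h; apply: zx.
(* An unrelated pair on the right already has the maximal distance u 0. *)
case: (pselect (escape_rel d F x z)) => rxz; last first.
  by rewrite (escape_metric_unrel xz rxz) le_max escape_metric_le0.
case: (pselect (escape_rel d F z y)) => rzy; last first.
  by rewrite (escape_metric_unrel zy rzy) le_max escape_metric_le0 orbT.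
rewrite (escape_metric_rel xy (escape_rel_trans d_ult rxz rzy)).
rewrite (escape_metric_rel xz rxz) (escape_metric_rel zy rzy).
have := um_max d_ult x y z; rewrite le_max => /orP [h|h].
  by rewrite le_max (floor_u_mono (um_gt0 d_ult xy) h).
by rewrite le_max (floor_u_mono (um_gt0 d_ult xy) h) orbT.
Qed.

Lemma escape_metric_in_S : S_valued S escape_metric.
Proof.
move=> x y; rewrite /escape_metric; case: eqP => [_|xy]; first exact: S_range.1.
by case: asboolP => _ //; apply/floor_u_in_S/(um_gt0 d_ult).
Qed.

(* Small d-balls lie in one escape class, where the metric is d rounded down;
   small escape-metric balls are thus within the class and below some u m. *)
Lemma escape_metric_top : generates_topology escape_metric.
Proof.
apply: (generates_topology_transfer d_top).
- move=> x r r0; have [a a0 ha] := escape_rel_nbhs d_top F_nocluster x.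
  exists (Num.min a r) => [|y]; first by rewrite lt_min a0 r0.
  rewrite lt_min => /andP [hya hyr].
  case: (pselect (x = y)) => [->|xy]; first by rewrite escape_metric_xx.
  rewrite escape_metric_rel //; last exact: ha.
  exact: le_lt_trans (floor_u_le (um_gt0 d_ult xy)) hyr.
- move=> x r r0; have [m hm] := coin_small r0; exists (u m) => [|y]; first exact: coin_pos.
  case: (pselect (x = y)) => [->|xy]; first by rewrite (um_xx d_ult).
  case: (pselect (escape_rel d F x y)) => rxy; last first.
    by rewrite escape_metric_unrel // ltNge decr_le.
  rewrite escape_metric_rel // => /(floor_u_lt (um_gt0 d_ult xy)) h.
  exact: lt_trans h hm.
Qed.

Lemma escape_metric_Ult : Ult S escape_metric.
Proof.
split; first exact: escape_metric_in_S.
by split; [exact: escape_metric_ult | exact: escape_metric_top].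
Qed.

End EscapeMetric.

(* Any metric UD-closer than u 0 to the escape metric is still u 0 on pairs of
   unrelated points, hence it is not doubling. *)
Lemma noncompact_not_dense (X : topologicalType) : ultrametrizable R X ->
  ~ compact [set: X] -> ~ UD_dense_in_Ult S [set d | Ult S d /\ @doubling R X d].
Proof.
move=> [d [d_ult d_top]] nc [_ dense].
have [F [F_proper F_nocluster]] := noncompact_filter nc.
have [f [Uf f_dbl] /UD_ltP [eps [_ epsu close]]] :=
  dense _ (escape_metric_Ult d_ult d_top F_nocluster) (u 0) (coin_pos 0).
have [_ [f_ult _]] := Uf.
apply: (equidistant_not_doubling (coin_pos 0) (um_ge0 f_ult) (um_xx f_ult) _ f_dbl) => N.
have [s [us ss hs]] := escape_scattered d_ult d_top F_proper F_nocluster N.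
exists s; split => // x y xs ys xy.
have unrel : escape_metric d F x y = u 0 by rewrite escape_metric_unrel //; apply: hs.
by rewrite (UD_close_agree close) unrel.
Qed.

Section DoublingApproximant.
Variables (X : topologicalType) (d : X -> X -> R).
Hypothesis d_ult : is_ultrametric d.
Hypothesis d_top : generates_topology d.
Hypothesis d_in_S : S_valued S d.
Variable L : nat -> seq X.
Hypothesis L_net : forall m x, exists2 c, c \in L m & d x c < u m.
Variable g : nat -> nat.
Hypothesis g_incr : forall k, (g k < g k.+1)%N.
Hypothesis g_half : forall k, u (g k.+1) <= u (g k) / 2.

Local Notation fd := (first_diff d u L).

Definition scale k := u (g k).

Lemma scale_pos k : 0 < scale k.
Proof. exact: coin_pos. Qed.

(* g k >= k, so the scales become arbitrarily small. *)
Lemma scale_small r : 0 < r -> exists k, scale k < r.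
Proof.
move=> r0; have [k hk] := coin_small r0; exists k; apply: le_lt_trans hk.
apply: (decr_le u_decr); elim: k => // k IH; exact: leq_ltn_trans IH (g_incr k).
Qed.

Let scale_decr := halving_decr scale_pos g_half.

Definition code_metric x y : R := if x == y then 0 else scale (fd x y).

Lemma code_metric_neq x y : x <> y -> code_metric x y = scale (fd x y).
Proof. by rewrite /code_metric; case: eqP. Qed.

Lemma code_metric_xx x : code_metric x x = 0.
Proof. by rewrite /code_metric eqxx. Qed.

Lemma code_metric_ge0 x y : 0 <= code_metric x y.
Proof. by rewrite /code_metric; case: eqP => _ //; exact/ltW/scale_pos. Qed.

Lemma code_metric_le x y : code_metric x y <= u (g 0).
Proof.
rewrite /code_metric; case: eqP => _; first exact/ltW/coin_pos.
exact: (decr_le scale_decr (leq0n _)).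
Qed.

(* Codes agreeing with a third one up to two positions agree up to the smaller. *)
Lemma code_metric_max x y z : code_metric x y <= Num.max (code_metric x z) (code_metric z y).
Proof.
case: (pselect (x = y)) => [->|xy]; first by rewrite code_metric_xx le_max code_metric_ge0.
case: (pselect (x = z)) => [<-|xz]; first by rewrite code_metric_xx le_max lexx orbT.
case: (pselect (z = y)) => [->|zy]; first by rewrite code_metric_xx le_max lexx.
rewrite !code_metric_neq //; have := first_diff_ult d_ult L_net coin_small xy xz zy.
by rewrite geq_min le_max => /orP [h|h]; rewrite (decr_le scale_decr h) ?orbT.
Qed.

Definition approximant x y : R := if d x y < u (g 0) then code_metric x y else d x y.

Lemma approximant_lt x y : d x y < u (g 0) -> approximant x y = code_metric x y.
Proof. by rewrite /approximant => ->. Qed.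

Lemma approximant_ge x y : ~ (d x y < u (g 0)) -> approximant x y = d x y.
Proof. by rewrite /approximant => /negP /negbTE ->. Qed.

Lemma approximant_ge0 x y : 0 <= approximant x y.
Proof. by rewrite /approximant; case: ifP => _; [exact: code_metric_ge0 | exact: um_ge0]. Qed.

Lemma approximant_ult : is_ultrametric approximant.
Proof.
apply: ultrametricP; first exact: approximant_ge0.
- move=> x y; split => [|->]; last by rewrite approximant_lt ?code_metric_xx // um_xx // coin_pos.
  apply: contraPP => xy; apply/eqP; rewrite gt_eqF //.
  case: (pselect (d x y < u (g 0))) => h; last by rewrite approximant_ge // um_gt0.
  by rewrite approximant_lt // code_metric_neq // scale_pos.
- move=> x y; rewrite /approximant (um_sym d_ult y x); case: ifP => // _.
  case: (pselect (x = y)) => [->//|xy]; have yx : y <> x by move=> h; apply: xy.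
  by rewrite !code_metric_neq // (first_diff_sym d_ult L_net coin_small xy).
(* Large distances are those of d; small ones are at most u (g 0). *)
move=> x y z; case: (pselect (d x y < u (g 0))) => hxy; last first.
  rewrite (approximant_ge hxy); have := um_max d_ult x y z; rewrite le_max => /orP [h|h].
    have hxz : ~ (d x z < u (g 0)) by move=> h2; apply: hxy; exact: le_lt_trans h h2.
    by rewrite (approximant_ge hxz) le_max h.
  have hzy : ~ (d z y < u (g 0)) by move=> h2; apply: hxy; exact: le_lt_trans h h2.
  by rewrite (approximant_ge hzy) le_max h orbT.
rewrite (approximant_lt hxy).
case: (pselect (d x z < u (g 0))) => hxz; last first.
  rewrite (approximant_ge hxz) le_max; apply/orP; left.
  by apply: le_trans (code_metric_le x y) _; rewrite leNgt; apply/negP.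
case: (pselect (d z y < u (g 0))) => hzy; last first.
  rewrite (approximant_ge hzy) le_max; apply/orP; right.
  by apply: le_trans (code_metric_le x y) _; rewrite leNgt; apply/negP.
by rewrite (approximant_lt hxz) (approximant_lt hzy) code_metric_max.
Qed.

Lemma approximant_in_S : S_valued S approximant.
Proof.
move=> x y; rewrite /approximant; case: ifP => _ //; rewrite /code_metric.
by case: eqP => _; [exact: S_range.1 | exact: u_in_S].
Qed.

Lemma approximant_close : UD_close d approximant (u (g 0)).
Proof.
move=> x y; case: (pselect (d x y < u (g 0))) => h; last first.
  by rewrite approximant_ge // le_max lexx.
by rewrite approximant_lt // !le_max (ltW h) code_metric_le !orbT.
Qed.

(* Points in a small d-ball agree on a long code prefix; conversely a long
   common code prefix includes the level m bits, forcing d x y < u m. *)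
Lemma approximant_top : generates_topology approximant.
Proof.
apply: (generates_topology_transfer d_top).
- move=> x r r0; have [k hk] := scale_small r0.
  exists (Num.min (u k) (u (g 0))) => [|y]; first by rewrite lt_min !coin_pos.
  rewrite lt_min => /andP [h1 h2]; rewrite approximant_lt //.
  case: (pselect (x = y)) => [->|xy]; first by rewrite code_metric_xx.
  rewrite code_metric_neq //.
  have fdk : (code_offset L k <= fd x y)%N.
    apply: (first_diff_ge d_ult L_net coin_small xy).
    apply: code_eq_upto => m mk; apply/(net_indexP d_ult L_net).
    by apply: lt_le_trans h1 _; apply: (decr_le u_decr); exact: ltnW.
  apply: le_lt_trans hk; apply: (decr_le scale_decr).
  exact: leq_trans (code_offset_ge L k) fdk.
- move=> x r r0; have [M hM] := coin_small r0.
  pose q := (code_offset L M + net_size L M)%N.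
  exists (Num.min (u (g 0)) (scale q)) => [|y]; first by rewrite lt_min coin_pos scale_pos.
  rewrite lt_min => /andP [h1 h2].
  case: (pselect (x = y)) => [->|xy]; first by rewrite um_xx.
  have hd : d x y < u (g 0).
    by apply: contrapT => hn; move: h1; rewrite approximant_ge // ltxx.
  rewrite approximant_lt // code_metric_neq // in h2.
  have qf : (q < fd x y)%N := decr_ltE scale_decr h2.
  have hle : (net_index d u L M x <= net_size L M)%N by exact/ltnW/net_index_lt.
  have := first_diff_eq (q := (code_offset L M + net_index d u L M x)%N)
    d_ult L_net coin_small xy.
  rewrite (leq_ltn_trans _ qf) ?leq_add2l // => /(_ isT).
  rewrite !code_level // eqxx => /esym/eqP h.
  by apply: lt_trans hM; apply/(net_indexP d_ult L_net); rewrite h.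
Qed.

(* Within one u (g 0)-block the approximant is the code metric; the pairwise
   distances of a finite set s lie in [sep, diam], so their first differences
   lie in a window of n bits with 2^n <= 2 diam/sep. *)
Lemma approximant_doubling : doubling approximant.
Proof.
exists 1, (2 * (net_size L (g 0)).+1%:R); split => //; split.
  by rewrite -natrM ler1n muln_gt0.
move=> s us ss; pose dl := diam approximant s; pose sg := sep approximant s.
have sg0 : 0 < sg := sep_pos (um_gt0 approximant_ult) us ss.
have sgdl : sg <= dl := sep_le_diam approximant_ge0 us ss.
have [i [n [pow window]]] := halving_window scale_pos g_half scale_small sg0 sgdl.
have card : (size s <= (net_size L (g 0)).+1 * 2 ^ n)%N.
  apply: (block_card d_ult L_net coin_small us) => x y xs ys xy /(net_indexP d_ult L_net) hb.
  have e_fd : approximant x y = scale (fd x y) by rewrite approximant_lt // code_metric_neq.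
  apply: window; rewrite -e_fd; [exact: sep_le approximant_ge0 xs ys xy | exact: diam_ge].
rewrite powRr1; last by apply: divr_ge0; apply: ltW => //; exact: lt_le_trans sgdl.
apply: le_trans (_ : _ <= ((net_size L (g 0)).+1 * 2 ^ n)%:R) _; first by rewrite ler_nat.
by rewrite natrM natrX [2 * _]mulrC -mulrA ler_pM2l.
Qed.

End DoublingApproximant.

Lemma compact_dense (X : topologicalType) : compact [set: X] ->
  UD_dense_in_Ult S [set d | Ult S d /\ @doubling R X d].
Proof.
move=> X_compact; split => [d []//|d [d_in_S [d_ult d_top]] r r0].
have [L L_net] := compact_nets d_ult d_top X_compact coin_pos.
have [p up] := coin_small r0.
have [g [g0 g_step]] := coin_halving p.
have g_incr k := (g_step k).1; have g_half k := (g_step k).2.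
exists (approximant d L g).
  split; last exact: (approximant_doubling d_ult L_net g_incr g_half).
  split; first exact: approximant_in_S.
  split; first exact: (approximant_ult d_ult L_net g_half).
  exact: (approximant_top d_ult d_top L_net g_incr g_half).
apply: le_lt_trans (UD_le (u_in_S (g 0)) (approximant_close d L g_half)) _.
by rewrite lte_fin g0.
Qed.

End CoinitialSequence.

Theorem theorem1p3 (R : realType) (S : set R) (X : topologicalType) :
  range_set S -> countable_coinitiality S -> ultrametrizable R X ->
  (compact [set: X] <->
   (@UD_dense_in_Ult R X S [set d | Ult S d /\ doubling d] /\
    @UD_Fsigma_in_Ult R X S [set d | Ult S d /\ doubling d])).
Proof.
move=> S_range [u [u_in_S [u_decr u_cvg0]]] X_ult; split.
  move=> X_compact; split; last exact: doubling_Fsigma.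
  exact: (compact_dense S_range u_in_S u_decr u_cvg0 X_compact).
move=> [dense _]; apply: contrapT => noncompact.
exact: (noncompact_not_dense S_range u_in_S u_decr u_cvg0 X_ult noncompact dense).
Qed.
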